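(* Let $\mathcal{S} = (X, \xrightarrow{\Sigma}, \leq)$ be a very-WSTS and let $I_0$ be an ideal of $X$. Then the Ideal Karp-Miller algorithm, run on $\mathcal{S}$ from $I_0$, terminates.
   Context: A labeled transition system $\mathcal{S} = (X, \xrightarrow{\Sigma}, \leq)$ consists of a set $X$ of states, a finite alphabet $\Sigma$, a relation $\xrightarrow{a} \subseteq X \times X$ for each $a \in \Sigma$, and a quasi-ordering $\leq$ on $X$. It is a WSTS if $\leq$ is a well-quasi-ordering and it is monotone (if $x \xrightarrow{a} y$ and $x' \geq x$ then $x' \xrightarrow{*} y'$ for some $y' \geq y$). It has strong monotonicity if $x \xrightarrow{a} y$ and $x' \geq x$ imply $x' \xrightarrow{a} y'$ for some $y' \geq y$; it has strong-strict monotonicity if moreover $x \xrightarrow{a} y$ and $x' > x$ imply $x' \xrightarrow{a} y'$ for some $y' > y$. It is deterministic if each state has at most one $a$-successor for each $a \in \Sigma$. An ideal of $X$ is a nonempty downwards-closed directed subset of $X$; $\mathrm{Idl}(X)$ denotes the set of ideals. For a downwards-closed $D \subseteq X$, its ideal decomposition is the (finite) set of maximal ideals contained in $D$. The completion of $\mathcal{S}$ is the transition system $(\mathrm{Idl}(X), \xrightarrow{\Sigma}_{c}, \subseteq)$ where $I \xrightarrow{a}_{c} J$ iff $J$ belongs to the ideal decomposition of the downward closure of the set of $a$-successors of elements of $I$; it is finitely branching. When the completion is deterministic, $w(I)$ denotes the unique $w$-successor of $I$ in the completion, if defined. An acceleration candidate is a sequence $I_0 \subset I_1 \subset \cdots$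 of ideals. Levels: level $0$ of $\mathrm{Idl}(X)$ is $\mathrm{Idl}(X)$, and level $n>0$ is the set of unions $\bigcup_i I_i$ of acceleration candidates $I_0 \subset I_1 \subset \cdots$ of elements of level $n-1$. $\mathrm{Idl}(X)$ has finitely many levels if some level is empty. A very-WSTS is a WSTS $\mathcal{S}$ with strong monotonicity whose completion is a deterministic WSTS (in particular $\mathrm{Idl}(X)$ is well-quasi-ordered by $\subseteq$) with strong-strict monotonicity, and such that $\mathrm{Idl}(X)$ has finitely many levels. For $w \in \Sigma^+$ and an ideal $I$, the acceleration $w^\infty(I)$ is $\bigcup_{k \in \mathbb{N}} w^k(I)$ if $I \subset w(I)$, and $I$ otherwise. The Ideal Karp-Miller algorithm builds a tree whose nodes are labeled by pairs $\langle I, n\rangle$ (an ideal and a number of accelerations): it starts with a root labeled $\langle I_0, 0\rangle$; while there is an unmarked node $c : \langle I, n\rangle$, if $c$ has an ancestor labeled $\langle I', n'\rangle$ with $I' = I$ it marks $c$; otherwise, if $c$ has an ancestor $c' : \langle I', n'\rangle$ with $I' \subset I$ and $n' = n$, it replaces the label of $c$ by $\langle w^\infty(I), n+1\rangle$ where $w$ is the sequence of labels on the path from $c'$ to $c$; then, for every $a \in \Sigma$ such that $a(I)$ is defined (with $I$ the current ideal of $c$), it adds an $a$-labeled child of $c$ labeled $\langle a(I), n\rangle$ (with $n$ the current counter of $c$), and marks $c$. It returns the tree. *)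

From mathcomp Require Import all_boot.
From mathcomp Require Import boolp classical_sets.

Set Implicit Arguments.
Unset Strict Implicit.
Unset Printing Implicit Defensive.

Local Open Scope classical_set_scope.

Section LTS.
Variables (Sigma : finType) (S : Type).
Variable le : S -> S -> Prop.
Variable trans : Sigma -> S -> S -> Prop.

Definition quasi_order := (forall x, le x x) /\ (forall x y z, le x y -> le y z -> le x z).

Definition wqo := quasi_order /\
  forall f : nat -> S, exists i j, (i < j)%N /\ le (f i) (f j).

Inductive reach : S -> S -> Prop :=
| reach_refl x : reach x x
| reach_step a x y z : trans a x y -> reach y z -> reach x z.

Definition monotone := forall a x y x', trans a x y -> le x x' ->
  exists y', reach x' y' /\ le y y'.

Definition strong_monotone := forall a x y x', trans a x y -> le x x' ->
  exists y', trans a x' y' /\ le y y'.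

Definition lt_of x y := le x y /\ ~ le y x.

Definition strong_strict_monotone := strong_monotone /\
  forall a x y x', trans a x y -> lt_of x x' ->
  exists y', trans a x' y' /\ lt_of y y'.

Definition deterministic := forall a x y y', trans a x y -> trans a x y' -> y = y'.

Definition WSTS := wqo /\ monotone.
End LTS.

Section Ideals.
Variables (Sigma : finType) (X : Type).
Variable le : X -> X -> Prop.
Variable trans : Sigma -> X -> X -> Prop.

Definition down_closed (D : set X) := forall x y, le x y -> D y -> D x.

Definition directed (D : set X) :=
  forall x y, D x -> D y -> exists z, [/\ D z, le x z & le y z].

Definition is_ideal (D : set X) := D !=set0 /\ down_closed D /\ directed D.

Definition Idl := {I : set X | is_ideal I}.

Definition down_closure (A : set X) : set X := [set x | exists2 y, A y & le x y].

Definition ideal_decomposition (D : set X) : set (set X) :=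
  [set I | [/\ is_ideal I, I `<=` D &
     forall J, is_ideal J -> I `<=` J -> J `<=` D -> J = I]].

Definition post (a : Sigma) (I : set X) : set X :=
  [set y | exists2 x, I x & trans a x y].

Definition ctrans (a : Sigma) (I J : set X) : Prop :=
  is_ideal I /\ ideal_decomposition (down_closure (post a I)) J.

Definition Idl_incl (I J : Idl) : Prop := proj1_sig I `<=` proj1_sig J.
Definition Idl_trans (a : Sigma) (I J : Idl) : Prop := ctrans a (proj1_sig I) (proj1_sig J).

Fixpoint level (n : nat) : set (set X) :=
  match n with
  | 0 => is_ideal
  | n'.+1 => [set U | exists f : nat -> set X,
       [/\ (forall i, level n' (f i)), (forall i, f i `<` f i.+1) &
           U = \bigcup_i f i]]
  end.

Definition finitely_many_levels := exists n, level n = set0.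

Definition very_WSTS :=
  [/\ WSTS le trans, strong_monotone le trans,
      deterministic Idl_trans /\ WSTS Idl_incl Idl_trans,
      strong_strict_monotone Idl_incl Idl_trans & finitely_many_levels].

Fixpoint wrun (w : seq Sigma) (I J : set X) : Prop :=
  match w with
  | [::] => J = I
  | a :: w' => exists K, ctrans a I K /\ wrun w' K J
  end.

Fixpoint wpow (k : nat) (w : seq Sigma) (I J : set X) : Prop :=
  match k with
  | 0 => J = I
  | k'.+1 => exists K, wpow k' w I K /\ wrun w K J
  end.

Definition accel (w : seq Sigma) (I J : set X) : Prop :=
  ((exists I1, wrun w I I1 /\ I `<` I1) /\
     J = [set x | exists k K, wpow k w I K /\ K x])
  \/ (~ (exists I1, wrun w I I1 /\ I `<` I1) /\ J = I).

(* The Ideal Karp-Miller algorithm as a (nondeterministic) step        *)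
(* relation on trees. A node is identified by the word of edge labels  *)
(* from the root; its content is (ideal, acceleration counter, mark).  *)
Definition kmtree := seq Sigma -> option (set X * nat * bool).

Definition km_init (I0 : set X) : kmtree :=
  fun c => if c == [::] then Some (I0, 0%N, false) else None.

Definition ancestor_path (c' c w : seq Sigma) := w != [::] /\ c = c' ++ w.

(* one iteration of the while loop, processing the unmarked node c *)
Definition km_step (t t' : kmtree) : Prop :=
  exists c I n, t c = Some (I, n, false) /\
  (
    ((exists c' w n' b', ancestor_path c' c w /\ t c' = Some (I, n', b')) /\
     t' = (fun d => if d == c then Some (I, n, true) else t d))
  \/
    ((~ exists c' w n' b', ancestor_path c' c w /\ t c' = Some (I, n', b')) /\
     exists I2 n2,
       (
         (exists c' w I' b', [/\ ancestor_path c' c w, t c' = Some (I', n, b'),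
                                I' `<` I, accel w I I2 & n2 = n.+1])
       \/
         ((~ exists c' w I' b', [/\ ancestor_path c' c w, t c' = Some (I', n, b')
                                  & I' `<` I]) /\ I2 = I /\ n2 = n) ) /\
       t' c = Some (I2, n2, true) /\
       (forall a, (exists J, ctrans a I2 J /\ t' (rcons c a) = Some (J, n2, false))
               \/ ((~ exists J, ctrans a I2 J) /\ t' (rcons c a) = t (rcons c a))) /\
       (forall d, d != c -> (forall a, d != rcons c a) -> t' d = t d))).

Definition km_terminates (I0 : set X) : Prop :=
  Acc (fun t' t => km_step t t') (km_init I0).

End Ideals.

From mathcomp Require Import all_boot.
From mathcomp Require Import boolp classical_sets.

Set Implicit Arguments.
Unset Strict Implicit.
Unset Printing Implicit Defensive.

Local Open Scope classical_set_scope.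

(* Every node of a Karp-Miller tree carries an ideal of level n, n being its acceleration counter:
   the completion maps level n into itself and an acceleration w^oo(I) lands one level higher.
   Counters are nondecreasing along a branch and bounded by the number of levels, so on an
   infinite branch they are eventually constant; the completion being well-quasi-ordered, that
   part of the branch contains nodes i < j with I_i included in I_j, and node j would have been
   marked (equal ideals) or accelerated (strict inclusion), a contradiction. Since the tree is
   finitely branching, Koenig's lemma bounds the depth of every tree the algorithm can build,
   uniformly over its nondeterministic choices, and each iteration of the loop marks a new node
   of bounded depth. *)

Lemma subset_chain_le (T : Type) (f : nat -> set T) :
  (forall i, f i `<=` f i.+1) -> forall i j, (i <= j)%N -> f i `<=` f j.
Proof.
move=> f_incr i j /subnKC <-; elim: (j - i) => [|k IHk]; first by rewrite addn0.
by apply: subset_trans IHk _; rewrite addnS.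
Qed.

Lemma bounded_nondecreasing_stationary (u : nat -> nat) N :
  (forall i j, (i <= j)%N -> (u i <= u j)%N) -> (forall i, (u i < N)%N) ->
  exists K, forall j, (K <= j)%N -> u j = u K.
Proof.
move=> u_mono u_bnd.
have [K u_maxK] : exists K, forall j, (u j <= u K)%N.
  pose P m := `[< exists i, u i = m >].
  have P_ex : exists m, P m by exists (u 0); apply/asboolP; exists 0.
  have P_ub m : P m -> (m <= N)%N by move=> /asboolP [i <-]; apply: ltnW (u_bnd i).
  case: (ex_maxnP P_ex P_ub) => _ /asboolP [K <-] P_max.
  by exists K => j; apply: P_max; apply/asboolP; exists j.
by exists K => j Kj; apply/eqP; rewrite eqn_leq u_maxK u_mono.
Qed.

Lemma finite_uniform_bound (T : finType) (P : T -> nat -> Prop) :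
  (forall y m n, (m <= n)%N -> P y m -> P y n) -> (forall y, exists n, P y n) ->
  exists n, forall y, P y n.
Proof.
move=> P_mono /choice [f Pf]; exists (\max_y f y) => y.
by apply: P_mono (Pf y); apply: leq_bigmax.
Qed.

Lemma not_Acc_descending_chain (T : Type) (R : T -> T -> Prop) x :
  ~ Acc R x -> exists f : nat -> T, f 0 = x /\ forall i, R (f i.+1) (f i).
Proof.
move=> nAx.
have step y : exists z, ~ Acc R y -> R z y /\ ~ Acc R z.
  case: (pselect (Acc R y)) => [Ay|nAy]; first by exists y.
  apply: contrapT => no_z; apply: nAy; constructor => z Rzy.
  by apply: contrapT => nAz; apply: no_z; exists z.
have [g gP] := choice step.
pose f i := iter i g x.
have nAf i : ~ Acc R (f i) by elim: i => [|i IHi] //=; case: (gP _ IHi).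
by exists f; split => // i; case: (gP _ (nAf i)).
Qed.

Lemma Acc_bounded_measure (T : Type) (R : T -> T -> Prop) (P : T -> Prop) (m : T -> nat) B :
  (forall x y, P x -> R y x -> P y /\ (m x < m y)%N) -> (forall x, (m x <= B)%N) ->
  forall x, P x -> Acc R x.
Proof.
move=> step m_bnd.
suff acc k x : P x -> (B - m x <= k)%N -> Acc R x by move=> x Px; apply: (acc _ x Px).
elim: k x => [|k IHk] x Px Bx; constructor => y Ryx; have [Py mxy] := step _ _ Px Ryx.
  by have := leq_trans mxy (m_bnd y); rewrite ltnNge -subn_eq0 -leqn0 Bx.
apply: IHk Py _; rewrite -ltnS; apply: leq_trans Bx.
exact: ltn_sub2l (leq_trans mxy (m_bnd y)) mxy.
Qed.

(** * Ideals and the completion *)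

Section Ideals.
Variables (X : Type) (le : X -> X -> Prop).

Lemma bigcup_chain_ideal (f : nat -> set X) : (forall i, is_ideal le (f i)) ->
  (forall i, f i `<=` f i.+1) -> is_ideal le (\bigcup_i f i).
Proof.
move=> f_ideal f_incr; split; [|split].
- by case: (f_ideal 0) => [[x f0x] _]; exists x; exists 0.
- move=> x y le_xy [i _ fiy]; exists i => //.
  by case: (f_ideal i) => _ [fi_dc _]; apply: fi_dc le_xy fiy.
- move=> x y [i _ fi_x] [j _ fj_y].
  have sub_max := subset_chain_le f_incr.
  have fx := sub_max _ _ (leq_maxl i j) _ fi_x.
  have fy := sub_max _ _ (leq_maxr i j) _ fj_y.
  case: (f_ideal (maxn i j)) => _ [_ /(_ _ _ fx fy) [z [fz xz yz]]].
  by exists z; split => //; exists (maxn i j).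
Qed.

Hypothesis le_qo : quasi_order le.

Let le_refl x : le x x. Proof. by case: le_qo. Qed.
Let le_trans x y z : le x y -> le y z -> le x z. Proof. by case: le_qo => _; apply. Qed.

Lemma ideal_decomposition_cover (D : set X) x : down_closed le D -> D x ->
  exists2 I, ideal_decomposition le D I & I x.
Proof.
move=> D_dc Dx.
(* Zorn's lemma also sees the empty chain, whose union [set0] must qualify. *)
pose P (A : set X) := [/\ A `<=` D, down_closed le A, directed le A & (A !=set0 -> A x)].
have [|A [[AD A_dc A_dir A_x] A_max]] := @Zorn_bigcup X P.
  move=> F FP F_tot; split.
  - by move=> y [A FA Ay]; case: (FP A FA) => + _ _ _; apply.
  - by move=> y z yz [A FA Az]; exists A => //; case: (FP A FA) => _ A_dc _ _; apply: A_dc yz Az.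
  - move=> y z [A FA Ay] [B FB Bz].
    case: (F_tot A B FA FB) => sub.
    + case: (FP B FB) => _ _ /(_ y z (sub _ Ay) Bz) [u [Bu yu zu]] _.
      by exists u; split => //; exists B.
    + case: (FP A FA) => _ _ /(_ y z Ay (sub _ Bz)) [u [Au yu zu]] _.
      by exists u; split => //; exists A.
  - by move=> [y [A FA Ay]]; exists A => //; case: (FP A FA) => _ _ _; apply; exists y.
have x_down : down_closure le [set x] x by exists x; last exact: le_refl.
have Px : P (down_closure le [set x]).
  split.
  - by move=> y [_ -> yx]; apply: D_dc yx Dx.
  - by move=> y z yz [_ -> zx]; exists x => //; apply: le_trans yz zx.
  - by move=> y z [_ -> yx] [_ -> zx]; exists x.
  - by move=> _.
have Ax : A x.
  apply: A_x; apply/set0P/negP => /eqP A0; apply: (A_max _ _ Px).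
  by rewrite A0; split => // /(_ x); apply.
have A_ideal : is_ideal le A by split; [exists x|].
exists A => //; split => // J [_ [J_dc J_dir]] AJ JD.
apply/seteqP; split => //; apply: contrapT => nJA.
by apply: (A_max J); [split|split => // _; apply: AJ].
Qed.

End Ideals.

Section Completion.
Variables (Sigma : finType) (X : Type) (le : X -> X -> Prop).
Variable trans : Sigma -> X -> X -> Prop.
Hypothesis le_qo : quasi_order le.
Hypothesis completion_det : deterministic (Idl_trans (le := le) trans).

Definition cpost (a : Sigma) (I : set X) : set X := down_closure le (post trans a I).

Lemma cpost_down_closed a I : down_closed le (cpost a I).
Proof.
move=> x y xy [z Pz yz]; exists z => //.
by case: le_qo => _ le_trans; apply: le_trans xy yz.
Qed.

Lemma cpost_subset a I I' : I `<=` I' -> cpost a I `<=` cpost a I'.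
Proof. by move=> II' x [z [u Iu tu] xz]; exists z => //; exists u => //; apply: II'. Qed.

Lemma ctrans_ideal a I J : ctrans le trans a I J -> is_ideal le I /\ is_ideal le J.
Proof. by case=> I_ideal [J_ideal _ _]. Qed.

Lemma ctrans_cpost_eq a I J : ctrans le trans a I J -> J = cpost a I.
Proof.
move=> IJ; case: (IJ) => I_ideal [J_ideal JD _].
apply/seteqP; split => // y Dy.
have [M dM My] := ideal_decomposition_cover le_qo (@cpost_down_closed a I) Dy.
have [M_ideal _ _] := dM.
(* [J] and [M] are both [a]-successors of [I] in the deterministic completion *)
have := @completion_det a (exist _ I I_ideal) (exist _ J J_ideal) (exist _ M M_ideal) IJ.
by move=> /(_ (conj I_ideal dM)) /(congr1 sval) /= ->.
Qed.

Lemma ctrans_cpost a I : is_ideal le I -> cpost a I !=set0 -> ctrans le trans a I (cpost a I).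
Proof.
move=> I_ideal [y Dy].
have [M dM _] := ideal_decomposition_cover le_qo (@cpost_down_closed a I) Dy.
have IM : ctrans le trans a I M by [].
by rewrite -(ctrans_cpost_eq IM).
Qed.

Lemma ctrans_subset a I J I' : ctrans le trans a I J -> I `<=` I' -> is_ideal le I' ->
  ctrans le trans a I' (cpost a I') /\ J `<=` cpost a I'.
Proof.
move=> IJ II' I'_ideal; have JI' : J `<=` cpost a I'.
  by rewrite (ctrans_cpost_eq IJ); apply: cpost_subset.
have [_ [[y Jy] _]] := ctrans_ideal IJ.
by split => //; apply: ctrans_cpost => //; exists y; apply: JI'.
Qed.

Hypothesis completion_ssm :
  strong_strict_monotone (Idl_incl (le := le)) (Idl_trans (le := le) trans).

Lemma ctrans_proper a I J I' : ctrans le trans a I J -> I `<` I' -> is_ideal le I' ->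
  ctrans le trans a I' (cpost a I') /\ J `<` cpost a I'.
Proof.
move=> IJ [II' nI'I] I'_ideal; have [I_ideal J_ideal] := ctrans_ideal IJ.
have [_ /(_ a (exist _ I I_ideal) (exist _ J J_ideal) (exist _ I' I'_ideal))] := completion_ssm.
move=> /(_ IJ (conj II' nI'I)) [[K K_ideal] [/= I'K JK]].
by rewrite -(ctrans_cpost_eq I'K).
Qed.

Definition wpost (w : seq Sigma) (I : set X) : set X := foldl (fun K a => cpost a K) I w.

Lemma wrun_wpost w I J : wrun le trans w I J -> J = wpost w I.
Proof.
elim: w I => [|a w IHw] I /=; first by [].
by move=> [K [IK KJ]]; rewrite (IHw _ KJ) (ctrans_cpost_eq IK).
Qed.

Lemma wrun_rcons w a I J : wrun le trans (rcons w a) I J <->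
  exists K, wrun le trans w I K /\ ctrans le trans a K J.
Proof.
elim: w I => [|b w IHw] I /=; split.
- by move=> [K [IK ->]]; exists I.
- by move=> [K [-> IK]]; exists J.
- by move=> [K [IK /IHw [K' [KK' K'J]]]]; exists K'; split => //; exists K.
- by move=> [K' [[K [IK KK']] K'J]]; exists K; split => //; apply/IHw; exists K'.
Qed.

Lemma wrun_subset w I J I' : wrun le trans w I J -> I `<=` I' -> is_ideal le I' ->
  exists J', [/\ wrun le trans w I' J', J `<=` J', is_ideal le J' & (I `<` I' -> J `<` J')].
Proof.
elim: w I J I' => [|a w IHw] I J I' /=; first by move=> -> II' I'_ideal; exists I'.
move=> [K [IK KJ]] II' I'_ideal.
have [I'K' KK'] := ctrans_subset IK II' I'_ideal.
have [_ K'_ideal] := ctrans_ideal I'K'.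
have [J' [K'J' JJ' J'_ideal KJ'_proper]] := IHw _ _ _ KJ KK' K'_ideal.
exists J'; split => //; first by exists (cpost a I').
by move=> II'_proper; apply: KJ'_proper; case: (ctrans_proper IK II'_proper I'_ideal).
Qed.

(** * Levels *)

Lemma level_ideal n U : level le n U -> is_ideal le U.
Proof.
elim: n U => [|n IHn] U //= [f [f_level f_incr ->]].
by apply: bigcup_chain_ideal => [i|i]; [apply: IHn | apply: properW].
Qed.

Lemma level_succ n U : level le n.+1 U -> level le n U.
Proof.
elim: n U => [|n IHn] U [f [f_level f_incr ->]].
- by apply: bigcup_chain_ideal => // i; apply: properW.
- by rewrite /=; exists f; split => // i; apply: IHn; apply: f_level.
Qed.

Lemma level_le m n U : (m <= n)%N -> level le n U -> level le m U.
Proof.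
move=> /subnKC <-; elim: (n - m) U => [|k IHk] U; first by rewrite addn0.
by rewrite addnS => /level_succ /IHk.
Qed.

Lemma level_bounded : finitely_many_levels le -> exists N, forall n U, level le n U -> (n < N)%N.
Proof.
move=> [N levelN0]; exists N => n U nU; rewrite ltnNge; apply/negP => Nn.
by have := level_le Nn nU; rewrite levelN0.
Qed.

Lemma level_ctrans n a I J : level le n I -> ctrans le trans a I J -> level le n J.
Proof.
elim: n a I J => [|n IHn] a I J; first by move=> _ /ctrans_ideal [].
move=> /= [f [f_level f_incr ->]] IJ.
have f_ideal i : is_ideal le (f i) by apply: level_ideal (f_level i).
have f_le := subset_chain_le (fun i => properW (f_incr i)).
have [_ [[y Jy] _]] := ctrans_ideal IJ.
rewrite (ctrans_cpost_eq IJ) in Jy *.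
(* [a(f i)] is defined once [f i] contains a predecessor [x] of [J]: shift the chain there. *)
case: Jy => z [x [i0 _ f_x] xz] yz.
pose g i := cpost a (f (i + i0)).
have fg i : ctrans le trans a (f (i + i0)) (g i).
  apply: ctrans_cpost => //; exists y; exists z => //.
  by exists x => //; apply: f_le (leq_addl _ _) _ f_x.
exists g; split.
- by move=> i; apply: IHn (fg i).
- by move=> i; have [_] := ctrans_proper (fg i) (f_incr (i + i0)) (f_ideal _); rewrite /g addSn.
- apply/seteqP; split.
  + move=> u [v [x' [i _ f_x'] x'v] uv]; exists i => //; exists v => //; exists x' => //.
    by apply: f_le (leq_addr _ _) _ f_x'.
  + by move=> u [i _ [v [x' f_x' x'v] uv]]; exists v => //; exists x' => //; exists (i + i0).
Qed.

Lemma wrun_level n w I J : level le n I -> wrun le trans w I J -> level le n J.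
Proof.
elim: w I => [|a w IHw] I /=; first by move=> + ->.
by move=> nI [K [IK KJ]]; apply: IHw KJ; apply: level_ctrans IK.
Qed.

Lemma accel_level n w I I1 J : level le n I -> wrun le trans w I I1 -> I `<` I1 ->
  accel le trans w I J -> level le n.+1 J.
Proof.
move=> nI II1 II1_proper [[_ ->]|[no_incr _]]; last by exfalso; apply: no_incr; exists I1.
pose f k := iter k (wpost w) I.
have f_run k : [/\ wpow le trans k w I (f k), wrun le trans w (f k) (f k.+1),
    f k `<` f k.+1 & level le n (f k)].
  elim: k => [|k [fk_pow fk_run fk_proper fk_level]].
    by split => //=; rewrite -(wrun_wpost II1).
  have fk1_level := wrun_level fk_level fk_run.
  have [J' [fk1J' _ _ J'_proper]] := wrun_subset fk_run (properW fk_proper) (level_ideal fk1_level).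
  have fk2 : f k.+2 = J' by rewrite [f k.+2]/f iterS -/(f k.+1) -(wrun_wpost fk1J').
  by split; [exists (f k) | rewrite fk2 | rewrite fk2; apply: J'_proper |].
have wpow_f k K : wpow le trans k w I K -> K = f k.
  elim: k K => [|k IHk] K /=; first by [].
  by move=> [K' [IK' K'K]]; rewrite (wrun_wpost K'K) (IHk _ IK').
exists f; split => [i|i|]; [by case: (f_run i) | by case: (f_run i) |].
apply/seteqP; split.
- by move=> x [k [K [IK Kx]]]; exists k => //; rewrite -(wpow_f _ _ IK).
- by move=> x [k _ fkx]; exists k, (f k); split => //; case: (f_run k).
Qed.


(** * The Karp-Miller tree *)

Lemma ancestor_path_size (p d w : seq Sigma) : ancestor_path p d w -> (size p < size d)%N.
Proof. by case: w => [[]|a w] // [_ ->]; rewrite size_cat /= addnS ltnS leq_addr. Qed.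

Lemma ancestor_path_neq (p d w : seq Sigma) : ancestor_path p d w -> p != d.
Proof. by move=> /ancestor_path_size; apply: contraTneq => ->; rewrite ltnn. Qed.

Lemma ancestor_path_rcons (p c w : seq Sigma) a : ancestor_path p (rcons c a) w -> prefix p c.
Proof.
case/lastP: w => [[]|w b] // [_]; rewrite -rcons_cat => /rcons_inj [-> _].
exact: prefix_prefix.
Qed.

Lemma prefix_ancestor_path (p d w : seq Sigma) r : prefix r p -> ancestor_path p d w ->
  ancestor_path r d (drop (size r) p ++ w).
Proof.
move=> /prefixP [u ->] [nw ->]; rewrite drop_size_cat //; split; last by rewrite catA.
by apply: contra nw; rewrite -!size_eq0 size_cat addn_eq0 => /andP [].
Qed.

Lemma prefix_ancestor_pathP (p d : seq Sigma) : prefix p d -> p = d \/ exists w, ancestor_path p d w.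
Proof. by case/prefixP => [[|a w] ->]; [left; rewrite cats0 | right; exists (a :: w)]. Qed.

Lemma prefix_rcons_cases (r c : seq Sigma) a : prefix r (rcons c a) -> r = rcons c a \/ prefix r c.
Proof. by case/prefix_ancestor_pathP => [->|[w /ancestor_path_rcons]]; [left|right]. Qed.

Section KarpMiller.
Variable I0 : set X.
Hypothesis I0_ideal : is_ideal le I0.

(* [h p] is the label <I, n> that node [p] carries once it has been processed. *)
Definition labelling := seq Sigma -> set X * nat.

Definition init_label (h : labelling) (p : seq Sigma) : set X * nat :=
  match rev p with
  | [::] => (I0, 0)
  | a :: rq => (cpost a (h (rev rq)).1, (h (rev rq)).2)
  end.

Lemma init_label_rcons h q a : init_label h (rcons q a) = (cpost a (h q).1, (h q).2).
Proof. by rewrite /init_label rev_rcons revK. Qed.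

Lemma init_label_agree h h' p : (forall q a, p = rcons q a -> h q = h' q) ->
  init_label h p = init_label h' p.
Proof. by case/lastP: p => [|q a] // hh'; rewrite !init_label_rcons (hh' q a). Qed.

(* Node [p] went through the second branch of the loop body, which relabelled it [h p]. *)
Definition expanded_node (h : labelling) (p : seq Sigma) : Prop :=
  let: (J, m) := init_label h p in
  [/\ (forall q a, p = rcons q a -> ctrans le trans a (h q).1 J),
      ~ (exists q w, ancestor_path q p w /\ (h q).1 = J) &
      (exists q w, [/\ ancestor_path q p w, (h q).2 = m, (h q).1 `<` J,
           accel le trans w J (h p).1 & (h p).2 = m.+1])
      \/ ((~ exists q w, [/\ ancestor_path q p w, (h q).2 = m & (h q).1 `<` J])
           /\ h p = (J, m))].

Definition expanded_branch (h : labelling) (c : seq Sigma) :=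
  forall p, prefix p c -> expanded_node h p.

Definition km_inv (h : labelling) (t : kmtree Sigma X) : Prop :=
  (forall d l p w, t d = Some l -> ancestor_path p d w ->
     expanded_node h p /\ t p = Some (h p, true)) /\
  (forall d J m, t d = Some (J, m, false) ->
     (J, m) = init_label h d /\ (forall q a, d = rcons q a -> ctrans le trans a (h q).1 J)).

Definition marked (t : kmtree Sigma X) (d : seq Sigma) := exists l, t d = Some (l, true).

Definition relabel (h : labelling) (c : seq Sigma) (l : set X * nat) : labelling :=
  fun d => if d == c then l else h d.

Lemma relabel_at h c l : relabel h c l c = l.
Proof. by rewrite /relabel eqxx. Qed.

Lemma relabel_ancestor h c l q w : ancestor_path q c w -> relabel h c l q = h q.
Proof. by move=> /ancestor_path_neq qc; rewrite /relabel (negbTE qc). Qed.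

Lemma init_label_relabel h c l : init_label (relabel h c l) c = init_label h c.
Proof.
apply: init_label_agree => q a ->; apply: (@relabel_ancestor _ _ _ _ [:: a]).
by split => //; rewrite cats1.
Qed.

Lemma expanded_node_agree h h' p : (forall r, prefix r p -> h r = h' r) ->
  expanded_node h p -> expanded_node h' p.
Proof.
move=> hh'.
have E_init : init_label h p = init_label h' p.
  by apply: init_label_agree => q a pqa; apply: hh'; rewrite pqa prefix_rcons.
have E_anc q w : ancestor_path q p w -> h q = h' q.
  by move=> [_ pqw]; apply: hh'; rewrite pqw prefix_prefix.
have E_p : h p = h' p by apply/hh'/prefix_refl.
rewrite /expanded_node -E_init -E_p; case: (init_label h p) => I n [tr NE P]; split.
- move=> q a pqa; rewrite -(E_anc q [:: a]); first exact: tr pqa.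
  by split => //; rewrite pqa cats1.
- by move=> [q [w [qpw e]]]; apply: NE; exists q, w; rewrite (E_anc q w qpw).
- case: P => [[q [w [qpw e1 e2 ac e3]]]|[nx e]].
  + by left; exists q, w; rewrite -(E_anc q w qpw).
  + right; split => // [[q [w [qpw e1 e2]]]]; apply: nx; exists q, w.
    by rewrite (E_anc q w qpw).
Qed.

Lemma km_inv_init : km_inv (fun _ => (I0, 0)) (km_init I0).
Proof.
split=> [d l p w|d J m]; rewrite /km_init; case: eqP => // ->.
- by move=> _ /ancestor_path_size.
- by case=> <- <-; split => // [[]].
Qed.

Section Step.
Variables (h : labelling) (t : kmtree Sigma X) (c : seq Sigma) (I : set X) (n : nat).
Hypothesis t_inv : km_inv h t.
Hypothesis tc : t c = Some (I, n, false).

Lemma unmarked_ancestor q w : ancestor_path q c w -> expanded_node h q /\ t q = Some (h q, true).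
Proof. by case: t_inv => anc _; apply: anc tc. Qed.

Lemma unmarked_descendant_absent d w : ancestor_path c d w -> t d = None.
Proof.
case td: (t d) => [l|] // cdw; case: t_inv => anc _.
by have [_] := anc _ _ _ _ td cdw; rewrite tc.
Qed.

Lemma unmarked_child_absent a : t (rcons c a) = None.
Proof. by apply: (@unmarked_descendant_absent _ [:: a]); split => //; rewrite cats1. Qed.

Lemma km_inv_mark : km_inv h (fun d => if d == c then Some (I, n, true) else t d).
Proof.
case: t_inv => anc unm; split => [d l p w|d J m].
- case: eqP => [-> _|_ td] pdw.
  + by have [? ?] := unmarked_ancestor pdw; rewrite (negbTE (ancestor_path_neq pdw)).
  + have [? tp] := anc _ _ _ _ td pdw; split => //.
    by case: eqP => // pc; rewrite pc tc in tp.
- by case: eqP => // _; apply: unm.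
Qed.

Variables (I2 : set X) (n2 : nat) (t' : kmtree Sigma X).
Hypothesis no_equal_ancestor :
  ~ exists c' w n' b', ancestor_path c' c w /\ t c' = Some (I, n', b').
Hypothesis new_label :
  (exists c' w I' b', [/\ ancestor_path c' c w, t c' = Some (I', n, b'), I' `<` I,
                         accel le trans w I I2 & n2 = n.+1])
  \/ ((~ exists c' w I' b', [/\ ancestor_path c' c w, t c' = Some (I', n, b') & I' `<` I])
      /\ I2 = I /\ n2 = n).
Hypothesis t'c : t' c = Some (I2, n2, true).
Hypothesis t'_child : forall a,
  (exists J, ctrans le trans a I2 J /\ t' (rcons c a) = Some (J, n2, false))
  \/ ((~ exists J, ctrans le trans a I2 J) /\ t' (rcons c a) = t (rcons c a)).
Hypothesis t'_other : forall d, d != c -> (forall a, d != rcons c a) -> t' d = t d.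

Local Notation h' := (relabel h c (I2, n2)).

Lemma expanded_node_expand : expanded_node h' c.
Proof.
case: t_inv => _ /(_ _ _ _ tc) [E_init c_tr].
have E_anc q w : ancestor_path q c w -> h' q = h q := @relabel_ancestor h c _ q w.
rewrite /expanded_node init_label_relabel -E_init relabel_at /=; split.
- move=> q a cqa; rewrite (E_anc q [:: a]); first exact: c_tr cqa.
  by split => //; rewrite cqa cats1.
- move=> [q [w [qcw e]]]; apply: no_equal_ancestor; exists q, w, (h q).2, true.
  have [_ ->] := unmarked_ancestor qcw; move: e; rewrite (E_anc q w qcw).
  by case: (h q) => /= J m ->.
- case: new_label => [[c' [w [I' [b' [c'cw tc' lt ac e2]]]]]|[nx [-> ->]]].
  + left; exists c', w; have [_] := unmarked_ancestor c'cw.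
    by rewrite tc' (E_anc c' w c'cw) => -[<-].
  + right; split => // [[q [w [qcw e1 e2]]]]; apply: nx.
    exists q, w, (h q).1, true; have [_ ->] := unmarked_ancestor qcw.
    by move: e1 e2; rewrite (relabel_ancestor _ _ qcw); case: (h q) => J m /= -> lt.
Qed.

Lemma expanded_ancestor_expand p w : ancestor_path p c w ->
  expanded_node h' p /\ t' p = Some (h' p, true).
Proof.
move=> pcw; have [vp tp] := unmarked_ancestor pcw.
have pc := ancestor_path_neq pcw.
split.
- apply: expanded_node_agree vp => r rp; rewrite /relabel; case: eqP => // rc.
  by move: (leq_ltn_trans (size_prefix rp) (ancestor_path_size pcw)); rewrite rc ltnn.
- rewrite (relabel_ancestor _ _ pcw) t'_other // => a; apply/eqP => pca.
  by move: (ancestor_path_size pcw); rewrite pca size_rcons ltnNge leqnSn.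
Qed.

Lemma km_inv_expand : km_inv h' t'.
Proof.
case: t_inv => anc unm; split => [d l p w t'd pdw|d J m t'd].
- case: (eqVneq d c) => [dc|dc]; first by rewrite dc in pdw; apply: expanded_ancestor_expand pdw.
  case: (pselect (exists a, d = rcons c a)) => [[a da]|nda].
    rewrite da in pdw; case: (prefix_ancestor_pathP (ancestor_path_rcons pdw)) => [->|[w' pcw']].
    + by rewrite relabel_at t'c; split => //; apply: expanded_node_expand.
    + exact: expanded_ancestor_expand pcw'.
  have td : t d = Some l.
    by rewrite -t'_other // => a; apply/eqP => da; apply: nda; exists a.
  have [vp tp] := anc _ _ _ _ td pdw.
  (* the unmarked node [c] has no proper descendants in [t] *)
  have c_not_prefix : ~ prefix c p.
    by move=> cp; rewrite (unmarked_descendant_absent (prefix_ancestor_path cp pdw)) in td.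
  have h'_p r : prefix r p -> h' r = h r.
    by move=> rp; rewrite /relabel; case: eqP => // rc; rewrite rc in rp.
  split; first by apply: expanded_node_agree vp => r /h'_p ->.
  rewrite h'_p ?prefix_refl // t'_other //.
  + by apply/eqP => pc; apply: c_not_prefix; rewrite pc prefix_refl.
  + by move=> a; apply/eqP => pca; apply: c_not_prefix; rewrite pca prefix_rcons.
- case: (eqVneq d c) => [dc|dc]; first by rewrite dc t'c in t'd.
  case: (pselect (exists a, d = rcons c a)) => [[a da]|nda].
    rewrite da in t'd *; case: (t'_child a) => [[J' [tr tJ']]|[_ tJ']]; last first.
      by rewrite tJ' unmarked_child_absent in t'd.
    rewrite tJ' in t'd; case: t'd => <- <-.
    rewrite init_label_rcons relabel_at -(ctrans_cpost_eq tr); split => // q b.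
    by move=> /rcons_inj [<- <-]; rewrite relabel_at.
  have td : t d = Some (J, m, false).
    by rewrite -t'_other // => a; apply/eqP => da; apply: nda; exists a.
  have [E_init d_tr] := unm _ _ _ td.
  have h'_parent q a : d = rcons q a -> h' q = h q.
    by move=> dqa; rewrite /relabel; case: eqP => // qc; case: nda; exists a; rewrite dqa qc.
  split; first by rewrite E_init; apply: init_label_agree => q a /h'_parent ->.
  by move=> q a dqa; rewrite (h'_parent q a dqa); apply: d_tr.
Qed.

End Step.

Lemma km_step_inv h t t' : km_inv h t -> km_step le trans t t' ->
  exists c h', [/\ km_inv h' t', forall d, marked t d -> marked t' d, marked t' c,
    ~ marked t c & exists l, t c = Some l].
Proof.
move=> t_inv [c [I [n [tc step]]]].
have c_unmarked : ~ marked t c by move=> [l]; rewrite tc.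
case: step => [[_ ->]|[no_eq [I2 [n2 [new [t'c [t'_child t'_other]]]]]]].
  exists c, h; split; [exact: km_inv_mark tc | | by exists (I, n); rewrite eqxx | by [] |].
    by move=> d [l td]; exists l; case: eqP => // dc; rewrite dc tc in td.
  by exists (I, n, false).
exists c, (relabel h c (I2, n2)); split; [ | | by exists (I2, n2) | by [] |].
  exact: (km_inv_expand t_inv tc no_eq new t'c t'_child t'_other).
  move=> d [l td]; exists l; rewrite t'_other //.
    by apply/eqP => dc; apply: c_unmarked; exists l; rewrite -dc.
  by move=> a; apply/eqP => da; rewrite da (unmarked_child_absent t_inv tc) in td.
by exists (I, n, false).
Qed.

(** * Branches of the tree *)

Lemma expanded_branch_prefix h c p : expanded_branch h c -> prefix p c -> expanded_branch h p.
Proof. by move=> hc pc r rp; apply: hc; apply: prefix_trans rp pc. Qed.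

Lemma expanded_root h : expanded_node h [::] -> h [::] = (I0, 0).
Proof. by case=> _ _ [[q [w [/ancestor_path_size //]]]|[_ ->]]. Qed.

Lemma expanded_label_cases h p a : expanded_node h (rcons p a) ->
  h (rcons p a) = (cpost a (h p).1, (h p).2) \/ (h (rcons p a)).2 = (h p).2.+1.
Proof.
by rewrite /expanded_node init_label_rcons => -[_ _ [[q [w [_ _ _ _ ->]]]|[_ ->]]]; [right|left].
Qed.

Lemma expanded_counter_le h p a : expanded_node h (rcons p a) -> ((h p).2 <= (h (rcons p a)).2)%N.
Proof. by case/expanded_label_cases => ->. Qed.

Lemma expanded_counter_eq h p a : expanded_node h (rcons p a) ->
  (h (rcons p a)).2 = (h p).2 -> h (rcons p a) = (cpost a (h p).1, (h p).2).
Proof. by case/expanded_label_cases => -> // /esym /n_Sn. Qed.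

Lemma expanded_parent_ctrans h p a : expanded_node h (rcons p a) ->
  ctrans le trans a (h p).1 (cpost a (h p).1).
Proof. by rewrite /expanded_node init_label_rcons => -[/(_ p a erefl)]. Qed.

Lemma expanded_branch_counter_le h c q w : expanded_branch h c -> prefix (q ++ w) c ->
  ((h q).2 <= (h (q ++ w)).2)%N.
Proof.
move=> hc; elim/last_ind: w => [|w a IHw]; first by rewrite cats0.
rewrite -rcons_cat => qwa_c; have qw_c := prefix_trans (prefix_rcons _ a) qwa_c.
exact: leq_trans (IHw qw_c) (expanded_counter_le (hc _ qwa_c)).
Qed.

Lemma expanded_branch_wrun h c q w : expanded_branch h c -> prefix (q ++ w) c ->
  (h q).2 = (h (q ++ w)).2 -> wrun le trans w (h q).1 (h (q ++ w)).1.
Proof.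
move=> hc; elim/last_ind: w => [|w a IHw]; first by rewrite cats0.
rewrite -rcons_cat => qwa_c e; have qw_c := prefix_trans (prefix_rcons _ a) qwa_c.
have qwa_exp := hc _ qwa_c.
have e_qw : (h q).2 = (h (q ++ w)).2.
  by apply/eqP; rewrite eqn_leq (expanded_branch_counter_le hc qw_c) e expanded_counter_le.
have e_step : (h (rcons (q ++ w) a)).2 = (h (q ++ w)).2 by rewrite -e.
rewrite (expanded_counter_eq qwa_exp e_step) /=; apply/wrun_rcons; exists (h (q ++ w)).1.
by split; [apply: IHw | apply: expanded_parent_ctrans qwa_exp].
Qed.

Lemma expanded_branch_level h c p : expanded_branch h c -> prefix p c -> level le (h p).2 (h p).1.
Proof.
move=> hc; elim/last_ind: p => [|p a IHp] pa_c; first by rewrite (expanded_root (hc _ pa_c)).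
have p_c := prefix_trans (prefix_rcons p a) pa_c.
have pa_exp := hc _ pa_c.
have cpost_level := level_ctrans (IHp p_c) (expanded_parent_ctrans pa_exp).
move: (pa_exp); rewrite /expanded_node init_label_rcons.
case=> _ _ [[q [w [qw e_q lt ac ->]]]|[_ ->]] //.
case/lastP: w qw ac => [[]|w b] // [_]; rewrite -rcons_cat => /rcons_inj [p_qw <-] ac.
have wr : wrun le trans (rcons w a) (h q).1 (cpost a (h p).1).
  apply/wrun_rcons; exists (h p).1; split; last exact: expanded_parent_ctrans pa_exp.
  by rewrite p_qw in e_q *; apply: expanded_branch_wrun hc _ e_q; rewrite -p_qw.
have [J' [cpost_J' _ _ proper]] := wrun_subset wr (properW lt) (level_ideal cpost_level).
exact: accel_level cpost_level cpost_J' (proper lt) ac.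
Qed.

Lemma expanded_no_smaller_ancestor h p a q w :
  expanded_node h (rcons p a) -> (h (rcons p a)).2 = (h p).2 ->
  ancestor_path q (rcons p a) w -> (h q).2 = (h p).2 -> ~ (h q).1 `<=` (h (rcons p a)).1.
Proof.
move=> pa_exp e_pa qw e_q; have E := expanded_counter_eq pa_exp e_pa.
move: pa_exp; rewrite /expanded_node init_label_rcons E /=.
case=> _ NE [[_ [_ [_ _ _ _ /n_Sn //]]]|[nx _]] sub.
case: (pselect ((h q).1 = cpost a (h p).1)) => [eq|neq]; first by apply: NE; exists q, w.
by apply: nx; exists q, w; split => //; rewrite properEneq; split => //; apply/eqP.
Qed.

Definition branch_ext (x y : labelling * seq Sigma) : Prop :=
  exists a, [/\ x.2 = rcons y.2 a, forall r, prefix r y.2 -> x.1 r = y.1 r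
              & expanded_branch x.1 x.2].

Lemma branch_ext_chain (f : nat -> labelling * seq Sigma) :
  (forall i, branch_ext (f i.+1) (f i)) -> forall i j, (i <= j)%N ->
  [/\ prefix (f i).2 (f j).2, forall r, prefix r (f i).2 -> (f j).1 r = (f i).1 r
    & size (f j).2 = size (f i).2 + (j - i)].
Proof.
move=> f_ext i j /subnKC <-; rewrite addKn; elim: (j - i) => [|k [ik_pre ik_agr ik_size]].
  by rewrite !addn0; split => //; apply: prefix_refl.
rewrite addnS; case: (f_ext (i + k)) => a [-> agr _]; split.
- exact: prefix_trans ik_pre (prefix_rcons _ a).
- by move=> r ri; rewrite agr ?ik_agr //; apply: prefix_trans ri ik_pre.
- by rewrite size_rcons ik_size addnS.
Qed.

Hypothesis completion_wqo : wqo (Idl_incl (le := le)).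
Hypothesis levels_fin : finitely_many_levels le.

Section InfiniteBranch.
Variable f : nat -> labelling * seq Sigma.
Hypothesis f0_expanded : expanded_branch (f 0).1 (f 0).2.
Hypothesis f_ext : forall i, branch_ext (f i.+1) (f i).
Local Notation c i := (f i).2.
Local Notation h i := (f i).1.
Local Notation L i := ((f i).1 (f i).2).

Lemma no_infinite_branch : False.
Proof.
have f_exp i : expanded_branch (h i) (c i) by case: i => [|i] //; case: (f_ext i) => a [].
have f_chain := branch_ext_chain f_ext.
have h_stable i j : (i <= j)%N -> h j (c i) = L i.
  by move=> ij; have [_ agr _] := f_chain i j ij; apply/agr/prefix_refl.
have L_mono i j : (i <= j)%N -> ((L i).2 <= (L j).2)%N.
  move=> ij; have [/prefixP [w cj] _ _] := f_chain i j ij.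
  have := @expanded_branch_counter_le (h j) (c j) (c i) w (f_exp j).
  by rewrite -cj h_stable // prefix_refl => /(_ isT).
have L_level i : level le (L i).2 (L i).1 by apply: expanded_branch_level (f_exp i) (prefix_refl _).
have [N N_bnd] := level_bounded levels_fin.
have [K K_stat] := bounded_nondecreasing_stationary L_mono (fun i => N_bnd _ _ (L_level i)).
case: completion_wqo => _ /(_ (fun k => exist _ (L (K + k)).1 (level_ideal (L_level (K + k))))).
move=> [k [[|k'] [//= kk' L_sub]]]; rewrite /Idl_incl /= addnS in L_sub.
set i := K + k in L_sub; set j := K + k' in L_sub.
have ij : (i <= j)%N by rewrite leq_add2l.
have Ki : (K <= i)%N := leq_addr k K.
have Kj : (K <= j)%N := leq_addr k' K.
have L_eq m m' : (K <= m)%N -> (K <= m')%N -> (L m).2 = (L m').2.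
  by move=> Km Km'; rewrite K_stat // (K_stat m').
have [a [cj _ _]] := f_ext j.
have [/prefixP [w ci_w] _ size_cj] := f_chain i j.+1 (leqW ij).
have size_w : size w = j.+1 - i by move: size_cj; rewrite ci_w size_cat => /addnI.
apply: (@expanded_no_smaller_ancestor (h j.+1) (c j) a (c i) w).
- by rewrite -cj; apply: (f_exp j.+1) (prefix_refl _).
- by rewrite -cj h_stable //; apply: L_eq (leqW Kj) Kj.
- by split; [rewrite -size_eq0 size_w subSn | rewrite -cj].
- by rewrite !h_stable ?leqW //; apply: L_eq Ki Kj.
- by rewrite h_stable ?leqW // -cj.
Qed.

End InfiniteBranch.

Lemma expanded_branch_Acc x : expanded_branch x.1 x.2 -> Acc branch_ext x.
Proof.
move=> x_exp; apply: contrapT => nAx; have [f [f0 f_ext]] := not_Acc_descending_chain nAx.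
by apply: (@no_infinite_branch f) => //; rewrite f0.
Qed.

Lemma accel_functional w I J1 J2 : accel le trans w I J1 -> accel le trans w I J2 -> J1 = J2.
Proof. by case=> [[? ->]|[? ->]] [[? ->]|[? ->]]. Qed.

(* Which proper prefix of [c], if any, the label of the child [rcons c a] was accelerated along. *)
Definition label_choice (h : labelling) (c : seq Sigma) (a : Sigma) (o : option 'I_(size c).+1) :=
  let: (J, m) := init_label h (rcons c a) in
  if o is Some k then exists w, [/\ ancestor_path (take k c) (rcons c a) w,
      accel le trans w J (h (rcons c a)).1 & (h (rcons c a)).2 = m.+1]
  else h (rcons c a) = (J, m).
Arguments label_choice : clear implicits.

Lemma label_choice_exists h c a : expanded_node h (rcons c a) -> exists o, label_choice h c a o.
Proof.
rewrite /expanded_node /label_choice; case: (init_label h (rcons c a)) => J m.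
case=> _ _ [[q [w [qw _ _ ac e]]]|[_ e]]; last by exists None.
have q_c := ancestor_path_rcons qw.
have q_lt : (size q < (size c).+1)%N by rewrite ltnS size_prefix.
by exists (Some (Ordinal q_lt)), w; move: q_c; rewrite prefixE /= => /eqP ->.
Qed.

Lemma label_choice_unique h h' c a o : (forall r, prefix r c -> h r = h' r) ->
  label_choice h c a o -> label_choice h' c a o -> h (rcons c a) = h' (rcons c a).
Proof.
move=> hh'; rewrite /label_choice.
have -> : init_label h' (rcons c a) = init_label h (rcons c a).
  by rewrite !init_label_rcons hh' ?prefix_refl.
case: (init_label h (rcons c a)) => J m; case: o => [k|]; last by move=> -> ->.
move=> [w [[_ e] ac e2]] [w' [[_ e'] ac' e2']].
have ww' : w' = w by move: e'; rewrite e => /eqP; rewrite eqseq_cat // => /andP [_ /eqP].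
rewrite ww' in ac'; move: e2 e2' (accel_functional ac ac').
by case: (h (rcons c a)) => ? ?; case: (h' (rcons c a)) => ? ? /= -> -> ->.
Qed.

Definition depth_bounded (x : labelling * seq Sigma) (D : nat) := forall h d,
  (forall r, prefix r x.2 -> h r = x.1 r) -> expanded_branch h (x.2 ++ d) -> (size d <= D)%N.

Lemma Acc_depth_bounded x : Acc branch_ext x -> expanded_branch x.1 x.2 ->
  exists D, depth_bounded x D.
Proof.
elim=> -[h c] _ IH c_exp /=.
(* Below [rcons c a] everything is determined by [h] on [c] and the label choice at [rcons c a]. *)
pose P (y : Sigma * option 'I_(size c).+1) D := forall h' d,
  (forall r, prefix r c -> h' r = h r) -> expanded_branch h' (c ++ y.1 :: d) ->
  label_choice h' c y.1 y.2 -> (size d <= D)%N.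
have [D HD] : exists D, forall y, P y D.
  apply: finite_uniform_bound => [y D D' DD' Py h' d hh' d_exp ch|[a o]].
    exact: leq_trans (Py h' d hh' d_exp ch) DD'.
  case: (pselect (exists h1 d1, [/\ forall r, prefix r c -> h1 r = h r,
      expanded_branch h1 (c ++ a :: d1) & label_choice h1 c a o])); last first.
    by move=> none; exists 0 => h' d hh' d_exp ch; case: none; exists h', d.
  move=> [h1 [d1 [hh1 d1_exp ch1]]].
  have ca_exp : expanded_branch h1 (rcons c a).
    by apply: expanded_branch_prefix d1_exp _; rewrite -cat_rcons prefix_prefix.
  have [D1 HD1] := IH (h1, rcons c a) (ex_intro _ a (And3 erefl hh1 ca_exp)) ca_exp.
  exists D1 => h' d hh' d_exp ch; apply: (HD1 h') => /=; last by rewrite cat_rcons.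
  move=> r /prefix_rcons_cases [->|r_c]; last by rewrite hh' ?hh1.
  by apply: label_choice_unique ch ch1 => r' r'c; rewrite hh' ?hh1.
exists D.+1 => h' [|a d] hh' d_exp //=; rewrite ltnS.
have ca_exp : expanded_node h' (rcons c a) by apply: d_exp; rewrite -cat_rcons prefix_prefix.
have [o ch] := label_choice_exists ca_exp.
exact: (HD (a, o) h' d hh' d_exp ch).
Qed.

Lemma expanded_branch_depth : exists D, forall h c, expanded_branch h c -> (size c <= D)%N.
Proof.
pose h0 : labelling := fun=> (I0, 0).
have root_exp : expanded_branch h0 [::].
  move=> p; rewrite prefixs0 => /eqP ->; split => //.
  - by move=> q a; case: q.
  - by move=> [q [w [/ancestor_path_size]]].
  - by right; split => // [[q [w [/ancestor_path_size]]]].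
have [D D_bnd] := Acc_depth_bounded (@expanded_branch_Acc (h0, [::]) root_exp) root_exp.
exists D => h c c_exp; apply: (D_bnd h c) => // -[] // _.
by rewrite (expanded_root (c_exp _ (prefix0s c))).
Qed.

Lemma km_inv_present_depth D h t d l : (forall h c, expanded_branch h c -> (size c <= D)%N) ->
  km_inv h t -> t d = Some l -> (size d <= D.+1)%N.
Proof.
move=> D_bnd [anc _] td; case/lastP: d td => [|p a] td //.
have p_pa : ancestor_path p (rcons p a) [:: a] by split => //; rewrite cats1.
rewrite size_rcons ltnS; apply: (D_bnd h) => r rp.
by have [] := anc _ _ r _ td (prefix_ancestor_path rp p_pa).
Qed.

(** * Termination *)

(* Nodes of depth [k] are the [k]-tuples over [Sigma]. *)
Definition marked_count (D : nat) (t : kmtree Sigma X) :=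
  (\sum_(k < D.+2) #|[pred x : k.-tuple Sigma | `[< marked t x >] ]|)%N.

Definition node_count (D : nat) := (\sum_(k < D.+2) #|{: k.-tuple Sigma}|)%N.

Lemma marked_count_le D t : (marked_count D t <= node_count D)%N.
Proof. by apply: leq_sum => k _; apply: max_card. Qed.

Lemma marked_count_lt D t t' c : (forall d, marked t d -> marked t' d) -> marked t' c ->
  ~ marked t c -> (size c <= D.+1)%N -> (marked_count D t < marked_count D t')%N.
Proof.
move=> mono mc nmc sc; pose j : 'I_D.+2 := Ordinal (sc : (size c < D.+2)%N).
rewrite /marked_count (bigD1 j) //= [X in (_ < X)%N](bigD1 j) //= -addSn.
apply: leq_add; last first.
  by apply: leq_sum => k _; apply: subset_leq_card; apply/fintype.subsetP => x; rewrite !inE; apply: mono.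
apply: proper_card; apply/properP; split.
  by apply/fintype.subsetP => x; rewrite !inE; apply: mono.
by exists (in_tuple c : j.-tuple Sigma); rewrite !inE //; apply/asboolPn.
Qed.

Lemma ideal_karp_miller_terminates : km_terminates le trans I0.
Proof.
have [D D_bnd] := expanded_branch_depth.
apply: (@Acc_bounded_measure _ _ (fun t => exists h, km_inv h t) (marked_count D) (node_count D)).
- move=> t t' [h t_inv] step.
  have [c [h' [t'_inv mono mc nmc [l tc]]]] := km_step_inv t_inv step.
  split; first by exists h'.
  exact: marked_count_lt mono mc nmc (km_inv_present_depth D_bnd t_inv tc).
- exact: marked_count_le.
- by exists (fun=> (I0, 0)); apply: km_inv_init.
Qed.

End KarpMiller.
End Completion.

Theorem theorem8 (Sigma : finType) (X : Type) (le : X -> X -> Prop)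
  (trans : Sigma -> X -> X -> Prop) (I0 : set X) :
  very_WSTS le trans -> is_ideal le I0 -> km_terminates le trans I0.
Proof.
case=> [[[le_qo _] _] _ [det [c_wqo _]] ssm levels] I0_ideal.
exact: (ideal_karp_miller_terminates le_qo det ssm I0_ideal c_wqo levels).
Qed.
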